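(* Suppose a resolvable Steiner system $S(n,k-1,2)$ exists, and let $H_1,\ldots,H_t$ be graphs each of order less than $k$, where $t\le (n-1)/(k-2)$. Then $f(H_1,\ldots,H_t)\le n$.
   Context: All graphs are finite and simple; the order of a graph is its number of vertices. A graph $G$ is $(H_1,\ldots,H_t)$-full if every vertex of $G$ belongs to an induced subgraph of $G$ isomorphic to $H_i$, for each $i$. $f(H_1,\ldots,H_t)$ denotes the minimum order of an $(H_1,\ldots,H_t)$-full graph. A Steiner system $S(n,k-1,2)$ is a $(k-1)$-uniform hypergraph on $n$ vertices in which every pair of vertices lies in exactly one edge; it is resolvable if its edge set can be partitioned into perfect matchings (sets of pairwise disjoint edges whose union is the whole vertex set). *)

From mathcomp Require Import all_boot.
Unset Printing Implicit Defensive.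

Record sgraph := SGraph {
  sg_order : nat;
  sg_adj : rel 'I_sg_order;
  sg_sym : symmetric sg_adj;
  sg_irr : irreflexive sg_adj }.

Definition induced_emb (H G : sgraph) (f : 'I_(sg_order H) -> 'I_(sg_order G)) : Prop :=
  injective f /\ forall i j, sg_adj G (f i) (f j) = sg_adj H i j.

Definition in_induced_copy (G H : sgraph) (v : 'I_(sg_order G)) : Prop :=
  exists f, induced_emb H G f /\ exists i, f i = v.

Definition full (G : sgraph) (t : nat) (Hs : 'I_t -> sgraph) : Prop :=
  forall (v : 'I_(sg_order G)) (i : 'I_t), in_induced_copy G (Hs i) v.

Definition is_f (t : nat) (Hs : 'I_t -> sgraph) (m : nat) : Prop :=
  (exists G, full G t Hs /\ 0 < sg_order G /\ sg_order G = m) /\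
  (forall G, full G t Hs -> 0 < sg_order G -> m <= sg_order G).

Definition steiner_system (n r : nat) (B : {set {set 'I_n}}) : Prop :=
  (forall b, b \in B -> #|b| = r) /\
  (forall x y : 'I_n, x != y -> #|[set b in B | (x \in b) && (y \in b)]| = 1).

Definition resolvable (n : nat) (B : {set {set 'I_n}}) : Prop :=
  exists P : {set {set {set 'I_n}}},
    partition P B /\
    (forall C, C \in P -> trivIset C /\ cover C = [set: 'I_n]).

(** Give each graph [H_i] its own parallel class [C_i] of the resolution
   (there are [(n-1)/(k-2)] classes, as many as blocks through a point) and
   draw a copy of [H_i] on every block of [C_i], a block of [k-1] points being
   mapped onto the vertices of [H_i] by position modulo [|H_i|].  Two points
   lie in exactly one block, which lies in exactly one class, so these copies
   glue into a graph on the [n] points; each point lies in a block of every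
   class, and the copy of [H_i] on that block can be chosen through it. *)

From mathcomp Require Import all_boot zify boolp.

Lemma is_f_leq_order t (Hs : 'I_t -> sgraph) (G : sgraph) :
  full G t Hs -> 0 < sg_order G -> exists m, is_f t Hs m /\ m <= sg_order G.
Proof.
move=> fullG G_gt0.
pose has_full_graph m := exists G, full G t Hs /\ 0 < sg_order G /\ sg_order G = m.
have [|m /asboolP fm minm] := @ex_minnP (fun m => `[< has_full_graph m >]).
  by exists (sg_order G); apply/asboolP; exists G.
exists m; split; last by apply: minm; apply/asboolP; exists G.
by split=> // G' fullG' G'_gt0; apply: minm; apply/asboolP; exists G'.
Qed.

Lemma card_bigcup_leq {I T : finType} (P : pred I) (F : I -> {set T}) :
  #|\bigcup_(i | P i) F i| <= \sum_(i | P i) #|F i|.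
Proof.
elim/big_ind2: _ => [|m1 A1 m2 A2 le1 le2|//]; first by rewrite cards0.
exact: leq_trans (leq_card_setU A1 A2).1 (leq_add le1 le2).
Qed.

Definition pencil {n} (B : {set {set 'I_n}}) (x : 'I_n) : {set {set 'I_n}} :=
  [set b in B | x \in b].

Section SteinerSystem.

Context {n r : nat} {B : {set {set 'I_n}}}.
Hypothesis steinerB : steiner_system n r B.

Lemma steiner_block_through x y :
  x != y -> exists b, [set b in B | (x \in b) && (y \in b)] = [set b].
Proof. by move=> neq_xy; apply/cards1P/eqP; rewrite steinerB.2. Qed.

Lemma steiner_block_uniq {x y b b'} :
  x != y -> b \in B -> b' \in B -> x \in b -> y \in b -> x \in b' -> y \in b' ->
  b = b'.
Proof.
move=> /steiner_block_through[b0 Exy] bB b'B xb yb xb' yb'.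
have : b \in [set b0] by rewrite -Exy inE bB xb yb.
have : b' \in [set b0] by rewrite -Exy inE b'B xb' yb'.
by rewrite !inE => /eqP-> /eqP->.
Qed.

Lemma steiner_pencil_card x : n.-1 <= #|pencil B x| * r.-1.
Proof.
have notx_sub : [set~ x] \subset \bigcup_(b in pencil B x) (b :\ x).
  apply/subsetP=> y; rewrite !inE => neq_yx.
  have /steiner_block_through[b Exy] : x != y by rewrite eq_sym.
  have : b \in [set b] by rewrite inE.
  rewrite -Exy inE => /and3P[bB xb yb].
  by apply/bigcupP; exists b; rewrite !inE ?neq_yx ?bB ?xb ?yb.
have card_bx b : b \in pencil B x -> #|b :\ x| = r.-1.
  by rewrite inE => /andP[bB xb]; move: (cardsD1 x b); rewrite xb (steinerB.1 b bB) => ->.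
have -> : #|pencil B x| * r.-1 = \sum_(b in pencil B x) #|b :\ x|.
  by rewrite (eq_bigr _ card_bx) sum_nat_const.
rewrite -{1}(card_ord n) -(cardsC1 x).
exact: leq_trans (subset_leq_card notx_sub) (card_bigcup_leq _ _).
Qed.

End SteinerSystem.

Section Resolution.

Context {n r : nat} {B : {set {set 'I_n}}} {P : {set {set {set 'I_n}}}}.
Hypothesis steinerB : steiner_system n r B.
Hypothesis partP : partition P B.
Hypothesis classP : forall C, C \in P -> trivIset C /\ cover C = [set: 'I_n].

Lemma class_block_mem {C b} : C \in P -> b \in C -> b \in B.
Proof. by move=> CP bC; rewrite -(cover_partition partP); apply/bigcupP; exists C. Qed.

Lemma class_block_through C v : C \in P -> exists2 b, b \in C & v \in b.
Proof.
move=> /classP[_ coverC].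
have /bigcupP[b bC vb] : v \in cover C by rewrite coverC inE.
by exists b.
Qed.

Lemma class_block_uniq {C b b' x} :
  C \in P -> b \in C -> b' \in C -> x \in b -> x \in b' -> b = b'.
Proof.
move=> /classP[trivC _] bC b'C xb xb'.
by rewrite -(def_pblock trivC bC xb) (def_pblock trivC b'C xb').
Qed.

Lemma block_class_uniq {C C' b} : C \in P -> C' \in P -> b \in C -> b \in C' -> C = C'.
Proof.
have trivP := partition_trivIset partP.
by move=> CP C'P bC bC'; rewrite -(def_pblock trivP CP bC) (def_pblock trivP C'P bC').
Qed.

Lemma pencil_card_leq x : #|pencil B x| <= #|P|.
Proof.
have in_pblock b : b \in B -> b \in pblock P b.
  by move=> bB; rewrite mem_pblock (cover_partition partP).
have pblock_in_P b : b \in B -> pblock P b \in P.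
  by move=> bB; rewrite pblock_mem ?(cover_partition partP).
have inj_pblock : {in pencil B x &, injective (pblock P)}.
  move=> b b'; rewrite !inE => /andP[bB xb] /andP[b'B xb'] eqC.
  apply: (class_block_uniq (pblock_in_P b bB) (in_pblock b bB) _ xb xb').
  by rewrite eqC in_pblock.
rewrite -(card_in_imset inj_pblock); apply/subset_leq_card/subsetP=> C /imsetP[b].
by rewrite inE => /andP[bB _] ->; apply: pblock_in_P.
Qed.

Lemma class_family_block_uniq {I : Type} {c : I -> {set {set 'I_n}}} :
  injective c -> (forall i, c i \in P) ->
  forall i j b b' x y, x != y ->
  b \in c i -> b' \in c j -> x \in b -> y \in b -> x \in b' -> y \in b' ->
  i = j /\ b = b'.
Proof.
move=> c_inj cP i j b b' x y neq_xy bc b'c xb yb xb' yb'.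
have eq_b : b = b' := steiner_block_uniq steinerB neq_xy
  (class_block_mem (cP i) bc) (class_block_mem (cP j) b'c) xb yb xb' yb'.
split=> //; apply/c_inj/(block_class_uniq (cP i) (cP j) bc).
by rewrite eq_b.
Qed.

Lemma resolution_card (x : 'I_n) : n.-1 <= #|P| * r.-1.
Proof.
exact: leq_trans (steiner_pencil_card steinerB x) (leq_mul (pencil_card_leq x) (leqnn _)).
Qed.

End Resolution.

Section IndexMod.

Context {T : finType} (b : {set T}) {m : nat} (m_gt0 : 0 < m).

Definition index_mod (x : T) : 'I_m := Ordinal (ltn_pmod (index x (enum b)) m_gt0).

Lemma index_mod_section v :
  m <= #|b| -> v \in b ->
  exists f : 'I_m -> T, [/\ forall a, f a \in b, cancel f index_mod & exists a, f a = v].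
Proof.
move=> m_le_b vb; pose p := index v (enum b).
have a_lt_b (a : 'I_m) : a < size (enum b) by rewrite -cardE; apply: leq_trans m_le_b.
(* [v] may sit beyond position [m], so it takes the slot of its residue. *)
pose f (a : 'I_m) := if val a == p %% m then v else nth v (enum b) a.
exists f; split.
- by move=> a; rewrite /f; case: eqP => // _; rewrite -mem_enum mem_nth.
- move=> a; apply: val_inj; rewrite /f /=; case: eqP => [-> //|_].
  by rewrite index_uniq ?enum_uniq ?modn_small.
- by exists (Ordinal (ltn_pmod p m_gt0)); rewrite /f eqxx.
Qed.

End IndexMod.

Section Gluing.

Context {n t : nat} {Hs : 'I_t -> sgraph} {c : 'I_t -> {set {set 'I_n}}}.
Hypothesis Hs_gt0 : forall i, 0 < sg_order (Hs i).
Hypothesis c_large : forall {i b}, b \in c i -> sg_order (Hs i) <= #|b|.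
Hypothesis c_cover : forall i v, exists2 b, b \in c i & v \in b.
Hypothesis c_uniq : forall {i j b b' x y}, x != y ->
  b \in c i -> b' \in c j -> x \in b -> y \in b -> x \in b' -> y \in b' ->
  i = j /\ b = b'.

Local Notation phi i b := (index_mod b (Hs_gt0 i)).

Definition glued_adj : rel 'I_n := fun x y =>
  [exists i, exists b, [&& b \in c i, x \in b, y \in b, x != y &
                          sg_adj (Hs i) (phi i b x) (phi i b y)]].

Lemma glued_adj_sym : symmetric glued_adj.
Proof.
suff adj_sym x y : glued_adj x y -> glued_adj y x by move=> x y; apply/idP/idP; apply: adj_sym.
case/existsP=> i /existsP[b /and5P[bc xb yb neq_xy adj_xy]].
apply/existsP; exists i; apply/existsP; exists b.
by rewrite bc xb yb eq_sym neq_xy sg_sym.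
Qed.

Lemma glued_adj_irr : irreflexive glued_adj.
Proof. by move=> x; apply/existsP=> -[i /existsP[b]]; rewrite eqxx !andbF. Qed.

Definition glued_graph := @SGraph n glued_adj glued_adj_sym glued_adj_irr.

Lemma glued_adjE i b x y : b \in c i -> x \in b -> y \in b -> x != y ->
  glued_adj x y = sg_adj (Hs i) (phi i b x) (phi i b y).
Proof.
move=> bc xb yb neq_xy; apply/idP/idP; last first.
  by move=> adj_xy; apply/existsP; exists i; apply/existsP; exists b; rewrite bc xb yb neq_xy.
case/existsP=> j /existsP[b' /and5P[b'c xb' yb' _]].
by have [-> ->] := c_uniq neq_xy b'c bc xb' yb' xb yb.
Qed.

Lemma glued_graph_full : full glued_graph t Hs.
Proof.
move=> v i; have [b bc vb] := c_cover i v.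
have [f [fb fK [a fa]]] := index_mod_section b (Hs_gt0 i) v (c_large bc) vb.
exists f; split; last by exists a.
split=> [|a1 a2]; first exact: can_inj fK.
have [<-|neq_a] := eqVneq a1 a2; first by rewrite !sg_irr.
have neq_f : f a1 != f a2 by apply: contra neq_a => /eqP/(can_inj fK)->.
by rewrite /= (glued_adjE i b) ?fb // !fK.
Qed.

End Gluing.

Theorem theorem2p2 (n k t : nat) (Hs : 'I_t -> sgraph) :
  3 <= k ->
  (exists B : {set {set 'I_n}}, steiner_system n (k - 1) B /\ resolvable n B) ->
  (forall i, 0 < sg_order (Hs i) < k) ->
  t * (k - 2) + 1 <= n ->
  exists m, is_f t Hs m /\ m <= n.
Proof.
move=> k_ge3 [B [steinerB [P [partP classP]]]] Hs_order tk_lt_n.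
have n_gt0 : 0 < n by apply: leq_trans tk_lt_n; rewrite addn1.
have t_le_P : t <= #|P|.
  have := resolution_card steinerB partP classP (Ordinal n_gt0).
  have -> : (k - 1).-1 = k - 2 by lia.
  have k2_gt0 : 0 < k - 2 by rewrite subn_gt0.
  move=> le_P; rewrite -(leq_pmul2r k2_gt0); apply: leq_trans le_P.
  by rewrite -ltnS prednK // -addn1.
pose c i : {set {set 'I_n}} := enum_val (widen_ord t_le_P i).
have cP i : c i \in P := enum_valP _.
have c_inj : injective c by move=> i j /enum_val_inj/(congr1 val) eq_ij; apply: val_inj.
have Hs_gt0 i : 0 < sg_order (Hs i) by case/andP: (Hs_order i).
have c_large i b : b \in c i -> sg_order (Hs i) <= #|b|.
  move=> bc; rewrite (steinerB.1 b (class_block_mem partP (cP i) bc)).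
  by case/andP: (Hs_order i) => _; lia.
have c_cover i v : exists2 b, b \in c i & v \in b.
  exact: class_block_through classP _ v (cP i).
have fullG := glued_graph_full Hs_gt0 c_large c_cover
  (class_family_block_uniq steinerB partP c_inj cP).
exact: is_f_leq_order fullG n_gt0.
Qed.
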